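(* Let $S\subseteq N$ be a maximal $1$-switchable set. Then for all $a\in S$ and all $b\in N$, ${\rm s}(1,a,b)\in S$; that is, every element of $N$ that differs from an element of $S$ in at most the first component is also in $S$.
   Context: Fix positive integers $n, r_1,\dots,r_n$, let $N=[r_1]\times\cdots\times[r_n]$, and let $R$ be the polynomial ring over a field in the variables $x_a$, $a\in N$. For $a,b\in N$ and $i\in[n]$, ${\rm s}(i,a,b)\in N$ has $i$-th component $b_i$ and other components equal to those of $a$. Let $d(a,b)=\#\{j: a_j\neq b_j\}$ and $f_{i,a,b}=x_ax_b-x_{{\rm s}(i,a,b)}x_{{\rm s}(i,b,a)}$. A subset $S\subseteq N$ is $1$-switchable if for all $a,b\in S$ with $d(a,b)=2$, ${\rm s}(1,a,b)\in S$. Elements $a,b\in S$ are connected in $S$ if there are $a_0=a,\dots,a_k=b$ in $S$ with $d(a_{j-1},a_j)\le 1$ for all $j$. For $1$-switchable $S$: $\tilde{\mathcal{I}}^{\langle 1\rangle}_S=(f_{1,a,b}: a,b \text{ connected in } S)$, $\mathrm{Var}^{\langle 1\rangle}_S=(x_a: a\notin S)$, $P^{\langle 1\rangle}_S=\mathrm{Var}^{\langle 1\rangle}_S+\tilde{\mathcal{I}}^{\langle 1\rangle}_S$. A $1$-switchable $S$ is maximal $1$-switchable if for every $1$-switchable $T$ properly containing $S$, $P^{\langle 1\rangle}_S$ and $P^{\langle 1\rangle}_T$ are incomparable under inclusion. *)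

From HB Require Import structures.
From mathcomp Require Import all_boot all_order all_algebra.
From mathcomp Require Import mpoly.
Set Implicit Arguments. Unset Strict Implicit. Unset Printing Implicit Defensive.
Import GRing.Theory.
Local Open Scope ring_scope.

Section Defs.
Variables (n : nat) (r : 'I_n -> nat).

(* N = [r_1] x ... x [r_n], components 0-indexed: component j lies in 'I_(r j). *)
Definition Ngrid := {dffun forall j : 'I_n, 'I_(r j)}.

Definition dist (a b : Ngrid) : nat := #|[set j | a j != b j]|.

Definition sw (i : 'I_n) (a b : Ngrid) : Ngrid :=
  [ffun j => if j == i then b j else a j].

Definition switchable (i : 'I_n) (S : {set Ngrid}) : Prop :=
  forall a b, a \in S -> b \in S -> dist a b = 2%N -> sw i a b \in S.

Definition connected_in (S : {set Ngrid}) (a b : Ngrid) : bool :=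
  [&& a \in S, b \in S &
      connect (fun x y => [&& x \in S, y \in S & (dist x y <= 1)%N]) a b].

Variable F : fieldType.
Notation Poly := {mpoly F[#|{: Ngrid}|]}.

Definition xv (a : Ngrid) : Poly := 'X_(enum_rank a).

Definition fbin (i : 'I_n) (a b : Ngrid) : Poly :=
  xv a * xv b - xv (sw i a b) * xv (sw i b a).

Definition in_ideal (G : Poly -> Prop) (p : Poly) : Prop :=
  exists s : seq (Poly * Poly),
    (forall cg, cg \in s -> G cg.2) /\ p = \sum_(cg <- s) cg.1 * cg.2.

(* generators of P^<i>_S = Var_S + I~^<i>_S *)
Definition P_gens (i : 'I_n) (S : {set Ngrid}) (g : Poly) : Prop :=
  (exists a, a \notin S /\ g = xv a) \/
  (exists a b, connected_in S a b /\ g = fbin i a b).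

Definition P_ideal (i : 'I_n) (S : {set Ngrid}) : Poly -> Prop :=
  in_ideal (P_gens i S).

Definition ideal_sub (I J : Poly -> Prop) : Prop := forall p, I p -> J p.

Definition max_switchable (i : 'I_n) (S : {set Ngrid}) : Prop :=
  switchable i S /\
  forall T : {set Ngrid}, switchable i T -> S \proper T ->
    ~ ideal_sub (P_ideal i S) (P_ideal i T) /\
    ~ ideal_sub (P_ideal i T) (P_ideal i S).

End Defs.

(* Let T be the saturation of S in the first coordinate: all c that agree with
   some element of S outside coordinate 1.  T is trivially 1-switchable and
   contains S, and P_T is contained in P_S.  Indeed a variable x_c with c
   outside T has c outside S; for a binomial f_{1,a,b} with a, b connected in T,
   either a and b lie in S, and a chain in T lifts to a chain in S because S is
   switchable (two lifts at distance 2 are joined through their switch); or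
   s(1,a,b) and s(1,b,a) lie in S and f_{1,a,b} is minus their binomial; or each
   of the two monomials of f_{1,a,b} has a variable outside S.  Maximality of S
   therefore rules out S being a proper subset of T. *)
From HB Require Import structures.
From mathcomp Require Import all_boot all_order all_algebra.
From mathcomp Require Import mpoly.
Set Implicit Arguments. Unset Strict Implicit. Unset Printing Implicit Defensive.
Import GRing.Theory.
Local Open Scope ring_scope.

Section Ideals.
Variables (n : nat) (r : 'I_n -> nat) (F : fieldType).
Notation Poly := {mpoly F[#|{: Ngrid r}|]}.
Implicit Types (G H : Poly -> Prop) (p q : Poly).

Lemma in_ideal_gen G p : G p -> in_ideal G p.
Proof.
move=> Gp; exists [:: (1, p)]; split; first by move=> cg; rewrite inE => /eqP ->.
by rewrite big_seq1 mul1r.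
Qed.

Lemma in_idealD G p q : in_ideal G p -> in_ideal G q -> in_ideal G (p + q).
Proof.
move=> [s [Gs ->]] [t [Gt ->]]; exists (s ++ t); split; last by rewrite big_cat.
by move=> cg; rewrite mem_cat => /orP [/Gs | /Gt].
Qed.

Lemma in_idealMl G c p : in_ideal G p -> in_ideal G (c * p).
Proof.
move=> [s [Gs ->]]; exists [seq (c * cg.1, cg.2) | cg <- s]; split.
  by move=> cg /mapP [x xs ->]; exact: (Gs x xs).
by rewrite big_map mulr_sumr; apply: eq_bigr => x _; rewrite mulrA.
Qed.

Lemma in_idealMr G c p : in_ideal G p -> in_ideal G (p * c).
Proof. by rewrite mulrC; apply: in_idealMl. Qed.

Lemma in_idealN G p : in_ideal G p -> in_ideal G (- p).
Proof. by rewrite -mulN1r; apply: in_idealMl. Qed.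

Lemma in_ideal_gens G H p :
  (forall g, H g -> in_ideal G g) -> in_ideal H p -> in_ideal G p.
Proof.
move=> HG [s [Hs ->]]; elim: s Hs => [|cg s IHs] Hs.
  by rewrite big_nil; exists [::]; rewrite big_nil.
rewrite big_cons; apply: in_idealD.
  by apply/in_idealMl/HG/Hs; rewrite mem_head.
by apply: IHs => cg' cg's; apply: Hs; rewrite in_cons cg's orbT.
Qed.

End Ideals.

Section Switch.
Variables (n : nat) (r : 'I_n -> nat) (i : 'I_n).
Implicit Types (a b c x y : Ngrid r).

Lemma swE a b j : sw i a b j = if j == i then b j else a j.
Proof. by rewrite ffunE. Qed.

Lemma sw_id a : sw i a a = a.
Proof. by apply/ffunP => j; rewrite swE if_same. Qed.

Lemma sw_swap a b : sw i (sw i a b) (sw i b a) = a.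
Proof. by apply/ffunP => j; rewrite !swE; case: eqP => // ->. Qed.

Lemma sw_swr a b c : sw i (sw i a b) c = sw i a c.
Proof. by apply/ffunP => j; rewrite !swE; case: eqP. Qed.

Lemma sw_swl a b c : sw i a (sw i b c) = sw i a c.
Proof. by apply/ffunP => j; rewrite !swE; case: eqP. Qed.

Lemma dist_sym x y : dist x y = dist y x.
Proof. by apply: eq_card => j; rewrite !inE eq_sym. Qed.

Lemma dist0 x : dist x x = 0%N.
Proof. by apply: eq_card0 => j; rewrite !inE eqxx. Qed.

Lemma dist_sw a b : (dist a (sw i a b) <= 1)%N.
Proof.
rewrite -(cards1 i); apply: subset_leq_card; apply/subsetP => j.
by rewrite !inE swE; case: (eqVneq j i) => // _; rewrite eqxx.
Qed.

Definition adjacent_in (S : {set Ngrid r}) : rel (Ngrid r) :=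
  fun x y => [&& x \in S, y \in S & (dist x y <= 1)%N].

Definition saturation (S : {set Ngrid r}) : {set Ngrid r} :=
  [set c | [exists x in S, sw i x c == c]].

Variable S : {set Ngrid r}.

Lemma saturationP c :
  reflect (exists2 x, x \in S & sw i x c = c) (c \in saturation S).
Proof.
rewrite inE; apply: (iffP existsP) => [[x /andP [xS /eqP]] | [x xS sxc]].
  by exists x.
by exists x; rewrite xS sxc eqxx.
Qed.

Lemma sub_saturation : S \subset saturation S.
Proof. by apply/subsetP => x xS; apply/saturationP; exists x; rewrite ?sw_id. Qed.

Lemma saturation_sw a b : a \in saturation S -> sw i a b \in saturation S.
Proof.
case/saturationP => x xS sxa; apply/saturationP; exists x => //.
by rewrite sw_swl -[in RHS]sxa sw_swr.
Qed.

Lemma switchable_saturation : switchable i (saturation S).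
Proof. by move=> a b aT _ _; apply: saturation_sw. Qed.

Hypothesis swS : switchable i S.

Lemma lift_adjacent x y x' y' : x' \in S -> y' \in S ->
  sw i x' x = x -> sw i y' y = y -> (dist x y <= 1)%N ->
  connect (adjacent_in S) x' y'.
Proof.
move=> x'S y'S sx sy dxy.
have offi j : j != i -> (x' j != y' j) = (x j != y j).
  by move=> ji; rewrite -sx -sy !swE (negbTE ji).
have [dx'y'|dx'y'_gt1] := leqP (dist x' y') 1.
  by apply: connect1; apply/and3P.
have dx'y'_le2 : (dist x' y' <= 2)%N.
  apply: leq_trans (leq_add (leq_b1 (i \notin [set j | x j != y j])) dxy).
  rewrite -cardsU1; apply: subset_leq_card; apply/subsetP => j.
  by rewrite !inE; case: (eqVneq j i) => //= ji; rewrite offi.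
have d2 : dist x' y' = 2%N by apply/eqP; rewrite eqn_leq dx'y'_le2.
have zS : sw i x' y' \in S by apply: swS.
apply: (connect_trans (y := sw i x' y')); apply: connect1; apply/and3P.
  by split=> //; apply: dist_sw.
split=> //; apply: leq_trans dxy; apply: subset_leq_card; apply/subsetP => j.
by rewrite !inE swE; case: (eqVneq j i) => [->|ji]; rewrite ?eqxx // offi.
Qed.

Lemma lift_connect x y x' y' : x' \in S -> y' \in S ->
  sw i x' x = x -> sw i y' y = y ->
  connect (adjacent_in (saturation S)) x y -> connect (adjacent_in S) x' y'.
Proof.
move=> x'S y'S sx sy /connectP [p pxy yE]; move: sy; rewrite {}yE.
elim: p x x' x'S sx pxy => [|z p IHp] x x' x'S sx /=.
  by move=> _ sy; apply: (lift_adjacent x'S y'S sx sy); rewrite dist0.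
case/andP=> /and3P [_ /saturationP [z' z'S sz] dxz] pzy sy.
apply: connect_trans (lift_adjacent x'S z'S sx sz dxz) _.
exact: IHp z z' z'S sz pzy sy.
Qed.

Lemma connected_in_saturation a b : a \in S -> b \in S ->
  connected_in (saturation S) a b -> connected_in S a b.
Proof.
move=> aS bS /and3P [_ _ cab]; apply/and3P; split=> //.
exact: lift_connect (sw_id a) (sw_id b) cab.
Qed.

End Switch.

Section SaturationIdeal.
Variables (n : nat) (r : 'I_n -> nat) (i : 'I_n) (F : fieldType).
Variable S : {set Ngrid r}.
Hypothesis swS : switchable i S.
Notation T := (saturation i S).
Notation PS := (P_gens (F := F) i S).

Lemma var_in_P_ideal c : c \notin S -> in_ideal PS (xv F c).
Proof. by move=> cS; apply: in_ideal_gen; left; exists c. Qed.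

Lemma monomial_in_P_ideal c d : ~~ ((c \in S) && (d \in S)) ->
  in_ideal PS (xv F c * xv F d).
Proof.
rewrite negb_and => /orP [cS | dS].
  exact/in_idealMr/var_in_P_ideal.
exact/in_idealMl/var_in_P_ideal.
Qed.

Lemma fbin_in_P_ideal a b : connected_in T a b -> in_ideal PS (fbin F i a b).
Proof.
move=> cab; have /and3P [aT bT cab'] := cab.
have [/andP [aS bS] | nab] := boolP ((a \in S) && (b \in S)).
  apply: in_ideal_gen; right; exists a, b; split=> //.
  exact (connected_in_saturation swS aS bS cab).
set u := sw i a b; set v := sw i b a.
have [/andP [uS vS] | nuv] := boolP ((u \in S) && (v \in S)).
  have cuv : connected_in T u v.
    apply/and3P; split; rewrite ?saturation_sw //.
    apply: connect_trans (connect_trans _ cab') _; apply: connect1; apply/and3P.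
      by split; rewrite ?saturation_sw // dist_sym dist_sw.
    by split; rewrite ?saturation_sw // dist_sw.
  have -> : fbin F i a b = - fbin F i u v by rewrite /fbin !sw_swap opprB.
  apply/in_idealN/in_ideal_gen; right; exists u, v; split=> //.
  exact (connected_in_saturation swS uS vS cuv).
by apply: in_idealD; last apply: in_idealN; apply: monomial_in_P_ideal.
Qed.

Lemma P_ideal_saturation : ideal_sub (P_ideal (F := F) i T) (P_ideal (F := F) i S).
Proof.
move=> p; apply: in_ideal_gens => _ [[c [cT ->]] | [a [b [cab ->]]]].
  apply: var_in_P_ideal; apply: contra cT; apply/subsetP/sub_saturation.
exact: fbin_in_P_ideal.
Qed.

End SaturationIdeal.

Theorem lemma4p16 (n : nat) (hn : (0 < n)%N) (r : 'I_n -> nat)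
  (hr : forall j, (0 < r j)%N) (F : fieldType) (S : {set Ngrid r}) :
  max_switchable F (Ordinal hn) S ->
  forall a b : Ngrid r, a \in S -> sw (Ordinal hn) a b \in S.
Proof.
set i := Ordinal hn; move=> [swS maxS] a b aS; apply: contraT => swabS.
have ST : S \proper saturation i S.
  apply/properP; split; first exact: sub_saturation.
  by exists (sw i a b) => //; apply/saturation_sw/(subsetP (sub_saturation _ _)).
have [_ notTS] := maxS _ (switchable_saturation (S := S)) ST.
by case: (notTS (P_ideal_saturation swS)).
Qed.
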